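(* Let $G$ be a linear group (i.e. isomorphic to a subgroup of $GL_n(K)$ for some field $K$ and some $n$). If $G$ is discriminating, then $G$ is abelian.
   Context: A group $G$ is called discriminating if for every integer $N$ and every elements $h_1,\dots,h_N \in G\times G$ there exists a group homomorphism $\rho: G\times G \to G$ such that, for each $i$, $\rho(h_i)=1$ if and only if $h_i=1$. *)

(* Possibly infinite groups are given by an explicit carrier
   with operations and the group axioms. *)
From mathcomp Require Import all_boot all_algebra.
Set Implicit Arguments. Unset Strict Implicit. Unset Printing Implicit Defensive.
Import GRing.Theory.
Local Open Scope ring_scope.

Definition is_group (G : Type) (mul : G -> G -> G) (inv : G -> G) (one : G) : Prop :=
  (forall x y z, mul x (mul y z) = mul (mul x y) z) /\
  (forall x, mul one x = x) /\ (forall x, mul x one = x) /\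
  (forall x, mul (inv x) x = one) /\ (forall x, mul x (inv x) = one).

Definition is_linear (G : Type) (mul : G -> G -> G) : Prop :=
  exists (K : fieldType) (n : nat) (f : G -> 'M[K]_n),
    injective f /\
    (forall x, f x \in unitmx) /\
    (forall x y, f (mul x y) = f x *m f y).

Definition prod_mul (G : Type) (mul : G -> G -> G) (a b : G * G) : G * G :=
  (mul a.1 b.1, mul a.2 b.2).

Definition discriminating (G : Type) (mul : G -> G -> G) (one : G) : Prop :=
  forall (N : nat) (h : nat -> G * G),
    exists rho : G * G -> G,
      (forall a b, rho (prod_mul mul a b) = mul (rho a) (rho b)) /\
      (forall i, (i < N)%N -> (rho (h i) = one <-> h i = (one, one))).

Definition is_abelian (G : Type) (mul : G -> G -> G) : Prop :=
  forall x y, mul x y = mul y x.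

(* A discriminating group G that is not abelian contains, for every k, a
   "commuting chain" (x_i, y_i)_(i < k): y_i commutes with every x_l, l < i,
   but not with x_i.  Given such a chain of length k and a non-commuting pair
   (a, b), apply the discriminating property to the commutators of the chain
   placed in the first factor of G x G and to the commutator of (a, b) placed
   in the second; the two factors map to commuting images, which yields a chain
   of length k + 1.  In a group of n x n matrices, the y_i of a commuting chain
   are linearly independent, since y_i does not commute with x_i while all the
   later y_j do; hence k <= n^2, so a linear discriminating group is abelian. *)
From mathcomp Require Import all_boot all_algebra.
From Stdlib Require Import Classical.
Set Implicit Arguments. Unset Strict Implicit. Unset Printing Implicit Defensive.

Section CommutingChain.
Variables (T : Type) (op : T -> T -> T).

Definition commutes (x y : T) : Prop := op x y = op y x.

Definition commuting_chain (k : nat) (x y : nat -> T) : Prop :=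
  (forall l i, l < i < k -> commutes (y i) (x l)) /\
  (forall i, i < k -> ~ commutes (y i) (x i)).

End CommutingChain.

Lemma commuting_chain_morph (T U : Type) (opT : T -> T -> T) (opU : U -> U -> U)
    (f : T -> U) (k : nat) (x y : nat -> T) :
  injective f -> {morph f : a b / opT a b >-> opU a b} ->
  commuting_chain opT k x y -> commuting_chain opU k (f \o x) (f \o y).
Proof.
move=> f_inj fM [chain_comm chain_ncomm]; split=> [l i lik | i ik].
  by rewrite /commutes /= -!fM chain_comm.
by move=> fyx; apply: (chain_ncomm i ik); apply: f_inj; rewrite !fM.
Qed.

Section Discriminating.
Variables (G : Type) (mul : G -> G -> G) (inv : G -> G) (one : G).
Hypotheses (mulA : associative mul) (mul1g : left_id one mul)
  (mulg1 : right_id one mul) (mulVg : left_inverse one inv mul)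
  (mulgV : right_inverse one inv mul).

Definition commg (a b : G) : G := mul (mul a b) (inv (mul b a)).

Lemma commg_eq1 (a b : G) : commg a b = one <-> commutes mul a b.
Proof.
rewrite /commutes /commg; split=> [ab1 | ->]; last exact: mulgV.
by rewrite -[mul a b]mulg1 -(mulVg (mul b a)) mulA ab1 mul1g.
Qed.

Lemma mulKg (x y : G) : mul (inv x) (mul x y) = y.
Proof. by rewrite mulA mulVg mul1g. Qed.

Lemma inv_eq_mul1 (x y : G) : mul x y = one -> y = inv x.
Proof. by move=> xy1; rewrite -(mulKg x y) xy1 mulg1. Qed.

Section Morphism.
Variables (phi : G -> G) (phiM : {morph phi : a b / mul a b}).

Lemma morph1 : phi one = one.
Proof. by rewrite -[LHS](mulKg (phi one)) -phiM mul1g mulVg. Qed.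

Lemma morphV (a : G) : phi (inv a) = inv (phi a).
Proof. by apply: inv_eq_mul1; rewrite -phiM mulgV morph1. Qed.

Lemma morph_commg (a b : G) : phi (commg a b) = commg (phi a) (phi b).
Proof. by rewrite /commg phiM morphV !phiM. Qed.

End Morphism.

Lemma discriminating_commuting_morphisms (k : nat) (u v : nat -> G) (a b : G) :
  discriminating mul one ->
  exists phi psi : G -> G,
    [/\ {morph phi : x y / mul x y}, {morph psi : x y / mul x y},
        forall x y, commutes mul (psi y) (phi x),
        forall i, i < k -> commutes mul (phi (u i)) (phi (v i)) ->
                           commutes mul (u i) (v i) &
        commutes mul (psi a) (psi b) -> commutes mul a b].
Proof.
move=> discrG.
pose h i := if i < k then (commg (u i) (v i), one) else (one, commg a b).
have [rho [rhoM rho_eq1]] := discrG k.+1 h.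
pose phi x := rho (x, one); pose psi y := rho (one, y).
have phiM : {morph phi : x y / mul x y}.
  by move=> x y; rewrite /phi -rhoM /prod_mul /= mul1g.
have psiM : {morph psi : x y / mul x y}.
  by move=> x y; rewrite /psi -rhoM /prod_mul /= mul1g.
have commute_factors x y : commutes mul (psi y) (phi x).
  by rewrite /commutes /phi /psi -!rhoM /prod_mul /= !mul1g !mulg1.
have h_eq1 i : i <= k -> rho (h i) = one -> h i = (one, one).
  by move=> ik; apply: (proj1 (rho_eq1 i _)); rewrite ltnS.
exists phi, psi; split=> // [i ik | ] uv_comm.
  have /h_eq1 : rho (h i) = one.
    by rewrite /h ik -/(phi _) morph_commg //; apply/commg_eq1.
  by rewrite /h ik => /(_ (ltnW ik)) [/commg_eq1].
have /h_eq1 : rho (h k) = one.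
  by rewrite /h ltnn -/(psi _) morph_commg //; apply/commg_eq1.
by rewrite /h ltnn => /(_ (leqnn k)) [/commg_eq1].
Qed.

Lemma discriminating_commuting_chain (a b : G) :
  discriminating mul one -> ~ commutes mul a b ->
  forall k, exists x y, commuting_chain mul k x y.
Proof.
move=> discrG nab; elim=> [|k [x [y [chain_comm chain_ncomm]]]].
  by exists (fun=> one), (fun=> one); split.
have [phi [psi [phiM psiM phi_psi phiR psiR]]] :=
  discriminating_commuting_morphisms k y x a b discrG.
exists (fun i => if i < k then phi (x i) else psi b).
exists (fun i => if i < k then phi (y i) else psi a).
split=> [l i /andP[li ik] | i ik].
  rewrite (leq_trans li ik); case: ifP => [ik' | _]; last exact: phi_psi.
  by rewrite /commutes -!phiM chain_comm ?li.
case: ifP => [ik' | _]; last by move/psiR.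
by move/phiR => /(_ ik'); apply: chain_ncomm.
Qed.

End Discriminating.

Import GRing.Theory.
Local Open Scope ring_scope.

Section MatrixChain.
Variables (K : fieldType) (n : nat).

Lemma commute_span (A B : 'M[K]_n) (X : seq 'M[K]_n) :
  {in X, forall C, C *m A = A *m C} -> B \in <<X>>%VS -> B *m A = A *m B.
Proof.
move=> X_comm /(coord_span (X := in_tuple X)) ->.
rewrite mulmx_suml mulmx_sumr; apply: eq_bigr => i _.
by rewrite -scalemxAl -scalemxAr X_comm ?mem_nth.
Qed.

Lemma free_commuting_chain (k : nat) (A B : nat -> 'M[K]_n) :
  commuting_chain mulmx k A B ->
  forall m a, (a + m <= k)%N -> free [seq B i | i <- iota a m].
Proof.
move=> [chain_comm chain_ncomm]; elim=> [|m IHm] a amk /=; first exact: nil_free.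
rewrite free_cons IHm ?addSnnS // andbT.
have ak : (a < k)%N by apply: leq_trans amk; rewrite addnS ltnS leq_addr.
apply: contra_notN (chain_ncomm a ak); apply: commute_span => C /mapP[j].
rewrite mem_iota => /andP[aj jam] ->; apply: chain_comm.
by rewrite aj (leq_trans jam) // addSnnS.
Qed.

Lemma commuting_chain_leq (k : nat) (A B : nat -> 'M[K]_n) :
  commuting_chain mulmx k A B -> (k <= n * n)%N.
Proof.
move=> chainAB; have /eqP := free_commuting_chain chainAB (leqnn (0 + k)).
rewrite size_map size_iota => <-.
by have := dimvS (subvf <<[seq B i | i <- iota 0 k]>>); rewrite dimvf dim_matrix.
Qed.

End MatrixChain.

Theorem theorem6p7 (G : Type) (mul : G -> G -> G) (inv : G -> G) (one : G) :
  is_group mul inv one ->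
  is_linear mul ->
  discriminating mul one ->
  is_abelian mul.
Proof.
move=> [mulA [mul1g [mulg1 [mulVg mulgV]]]] [K [n [f [f_inj [_ fM]]]]] discrG a b.
apply: NNPP => nab.
have [x [y chainG]] := discriminating_commuting_chain mulA mul1g mulg1 mulVg
  mulgV discrG nab (n * n).+1.
have := commuting_chain_leq (commuting_chain_morph f_inj fM chainG).
by rewrite ltnn.
Qed.
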